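(* Let $K\subseteq\mathbb{R}^n$ be a compact convex set and $P=\{\mathbf{x}\in\mathbb{R}^n:\mathsf{A}\mathbf{x}\le\mathbf{b}\}$, $\mathsf{A}\in\mathbb{R}^{m\times n}$, $\mathbf{b}\in\mathbb{R}^m$, with $P\cap K=\emptyset$. For $\boldsymbol\varepsilon\in\mathbb{R}^m$ let $P_{\boldsymbol\varepsilon}:=\{\mathbf{x}\in\mathbb{R}^n:\mathsf{A}\mathbf{x}\le\mathbf{b}+\boldsymbol\varepsilon\}$. Then for every $\boldsymbol\varepsilon\in\mathbb{R}^m$, either $K\cap P_{\boldsymbol\varepsilon}=\emptyset$, or there exists $j\in[m]$ with $\varepsilon_j>0$ and $K\cap P_{\boldsymbol\varepsilon-(n+1)\varepsilon_j\mathbf{e}_j}=\emptyset$.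
   Context: $\mathbf{e}_j$ denotes the $j$-th standard basis vector of $\mathbb{R}^m$. *)

From HB Require Import structures.
From mathcomp Require Import all_boot all_order all_algebra.
From mathcomp Require Import all_classical all_reals all_analysis.
Set Implicit Arguments. Unset Strict Implicit. Unset Printing Implicit Defensive.
Import Order.TTheory GRing.Theory Num.Theory.
Import numFieldNormedType.Exports.
Local Open Scope ring_scope.
Local Open Scope classical_set_scope.

Definition polyhedron (R : realType) (m n : nat) (A : 'M[R]_(m, n))
    (b : 'cV[R]_m) : set 'cV[R]_n :=
  [set x | forall i : 'I_m, (A *m x) i ord0 <= b i ord0].

Definition std_basis (R : realType) (m : nat) (j : 'I_m) : 'cV[R]_m :=
  delta_mx j ord0.

From HB Require Import structures.
From mathcomp Require Import all_boot all_order all_algebra.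
From mathcomp Require Import all_classical all_reals all_analysis.
From mathcomp Require Import lra.
Import Order.TTheory GRing.Theory Num.Theory.
Import numFieldNormedType.Exports.
Local Open Scope ring_scope.
Local Open Scope classical_set_scope.

(* Since K misses P = {x | A x <= b}, Helly's theorem (applied to K and the m
   halfspaces defining P) yields a set S of at most n+1 rows such that K
   already misses {x | A_S x <= b_S}.  Suppose now that K meets P_eps, say
   at x0, and that K meets P_(eps - (n+1) eps_j e_j), say at p j, for every
   j with eps_j > 0.  With Sp the rows j of S with eps_j > 0 (so
   #|Sp| <= n+1), the convex combination
       (1 - #|Sp|/(n+1)) x0 + sum_(j in Sp) p j / (n+1)
   lies in K and satisfies every row of S of the unrelaxed system, a
   contradiction. *)

Section ConvexCombinations.
Variables (R : realFieldType) (M : lmodType R) (K : set M).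
Hypothesis convK : convex_set K.

(* Convexity of K, restated for a plain scalar t in [0, 1] instead of the
   bundled interval type {i01 R}. *)
Lemma convex_set2 x y t : K x -> K y -> 0 <= t -> t <= 1 ->
  K (t *: x + (1 - t) *: y).
Proof.
move=> Kx Ky t0 t1.
by have := convK x y (Itv01 t0 t1); rewrite !inE; apply.
Qed.

Lemma convex_comb (I : eqType) (s : seq I) (P : pred I) (w : I -> R)
    (q : I -> M) :
  (forall i, P i -> 0 <= w i) -> (forall i, P i -> K (q i)) ->
  \sum_(i <- s | P i) w i = 1 -> K (\sum_(i <- s | P i) w i *: q i).
Proof.
move=> + Kq; elim: s w => [|a s IH] w w_ge0.
  by rewrite big_nil => /eqP; rewrite eq_sym oner_eq0.
rewrite !big_cons; case: ifP => Pa; last exact: IH.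
set W := \sum_(i <- s | P i) w i => wa_W.
have W_ge0 : 0 <= W by apply: sumr_ge0.
have [W0|W_neq0] := eqVneq W 0.
  have /allP wi0 : all (fun i => P i ==> (w i == 0)) s.
    by rewrite -psumr_eq0 // -/W W0.
  rewrite big1_seq; last first.
    by move=> i /andP[Pi /wi0]; rewrite Pi => /eqP ->; rewrite scale0r.
  by move: wa_W; rewrite W0 addr0 => ->; rewrite scale1r addr0; apply: Kq.
(* Renormalise the tail to a convex combination z and write the whole sum
   as a two-point combination of q a and z. *)
set z := \sum_(i <- s | P i) (w i / W) *: q i.
have Kz : K z.
  apply: IH => [i Pi|]; first by rewrite divr_ge0 ?w_ge0.
  by rewrite -mulr_suml -/W divff.
have -> : \sum_(i <- s | P i) w i *: q i = (1 - w a) *: z.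
  have -> : 1 - w a = W by rewrite -wa_W addrC addKr.
  rewrite scaler_sumr; apply: eq_bigr => i _.
  by rewrite scalerA mulrCA divff ?mulr1.
by apply: convex_set2 => //; [exact: Kq | exact: w_ge0 | rewrite -wa_W lerDl].
Qed.

Lemma convex_comb_base (I : finType) (P : pred I) (w : I -> R) (q : I -> M)
    (x0 : M) :
  K x0 -> (forall i, P i -> 0 <= w i) -> (forall i, P i -> K (q i)) ->
  \sum_(i | P i) w i <= 1 ->
  K ((1 - \sum_(i | P i) w i) *: x0 + \sum_(i | P i) w i *: q i).
Proof.
move=> Kx0 w_ge0 Kq W_le1.
pose P' (o : option I) := if o is Some i then P i else true.
pose w' (o : option I) := if o is Some i then w i else 1 - \sum_(i | P i) w i.
pose q' (o : option I) := if o is Some i then q i else x0.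
have := @convex_comb _ (None :: map Some (index_enum I)) P' w' q'.
rewrite !big_cons !big_map /=; apply.
- by case=> [i /w_ge0 //|_]; rewrite subr_ge0.
- by case=> [i /Kq|].
- by rewrite subrK.
Qed.

End ConvexCombinations.

(* Affine dependence: more than n+1 points of R^n admit a nontrivial linear
   relation whose coefficients sum to 0 (the rows (p k, 1) of an N x (n+1)
   matrix with N > n+1 are linearly dependent). *)
Lemma affine_dependence {R : fieldType} {n N : nat} (p : 'I_N -> 'cV[R]_n) :
  (n.+1 < N)%N ->
  exists2 lam : ('I_N -> R), (exists k, lam k != 0) &
    \sum_k lam k = 0 /\ \sum_k lam k *: p k = 0.
Proof.
move=> N_gt.
pose P : 'M[R]_(N, n) := \matrix_(k, j) p k j ord0.
pose M := row_mx P (const_mx 1 : 'M[R]_(N, 1)).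
have : kermx M != 0.
  rewrite kermx_eq0 -row_leq_rank -ltnNge.
  by apply: leq_ltn_trans (rank_leq_col M) _; rewrite addn1.
case/rowV0Pn => v /sub_kermxP; rewrite mul_mx_row => /eqP.
rewrite row_mx_eq0 => /andP[/eqP vP /eqP v1] v_neq0.
exists (fun k => v ord0 k).
  have /existsP[k vk] : [exists k, v ord0 k != 0]; last by exists k.
  apply: contraNT v_neq0 => /existsPn v0; apply/eqP/rowP => k.
  by rewrite mxE; apply/eqP/negbNE/v0.
split.
  transitivity ((v *m (const_mx 1 : 'cV[R]_N)) ord0 ord0); last by rewrite v1 mxE.
  by rewrite mxE; apply: eq_bigr => k _; rewrite mxE mulr1.
apply/matrixP => a b; rewrite (ord1 b) summxE mxE.
transitivity ((v *m P) ord0 a); last by rewrite vP mxE.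
by rewrite mxE; apply: eq_bigr => k _; rewrite !mxE.
Qed.

Lemma pos_part_gt0 (R : realDomainType) (I : finType) (lam : I -> R) :
  (exists k, lam k != 0) -> \sum_k lam k = 0 ->
  0 < \sum_(k | 0 < lam k) lam k.
Proof.
move=> [k0 lk0] sum0; rewrite lt_def sumr_ge0 ?andbT => [|k /ltW //].
apply: contra lk0 => /eqP pos0.
have lam_le0 k : lam k <= 0.
  rewrite leNgt; apply/negP => lk.
  by move: (lk); rewrite (psumr_eq0P (fun k => @ltW _ _ 0 (lam k)) pos0 lk) ltxx.
have sumN0 : \sum_(k | true) - lam k = 0 by rewrite sumrN sum0 oppr0.
by rewrite -oppr_eq0 (psumr_eq0P _ sumN0) // => k _; rewrite oppr_ge0.
Qed.

Lemma radon {R : realFieldType} {n N : nat} (p : 'I_N -> 'cV[R]_n) :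
  (n.+1 < N)%N ->
  exists (I1 : pred 'I_N) (z : 'cV[R]_n), forall C : set 'cV[R]_n,
    convex_set C ->
    ((forall k, I1 k -> C (p k)) -> C z) /\
    ((forall k, ~~ I1 k -> C (p k)) -> C z).
Proof.
move=> N_gt; have [lam lam_neq0 [sum0 comb0]] := affine_dependence p N_gt.
pose I1 k := 0 < lam k; pose T := \sum_(k | I1 k) lam k.
have T_gt0 : 0 < T by apply: pos_part_gt0.
rewrite (bigID I1) /= -/T in sum0; rewrite (bigID I1) /= in comb0.
have sumN : \sum_(k | ~~ I1 k) - lam k = T by rewrite sumrN; lra.
(* Normalising the relation by T exhibits z as a convex combination of each
   part. *)
have scale_sum (P : pred 'I_N) (c : 'I_N -> R) :
    \sum_(k | P k) (c k / T) *: p k = T^-1 *: \sum_(k | P k) c k *: p k.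
  by rewrite scaler_sumr; apply: eq_bigr => k _; rewrite scalerA mulrC.
have combN : \sum_(k | ~~ I1 k) (- lam k / T) *: p k =
             \sum_(k | I1 k) (lam k / T) *: p k.
  rewrite !scale_sum; congr (_ *: _).
  rewrite (eq_bigr (fun k => - (lam k *: p k))) ?sumrN => [|k _]; last first.
    by rewrite scaleNr.
  by apply/eqP; rewrite eq_sym -subr_eq0 opprK comb0.
exists I1, (\sum_(k | I1 k) (lam k / T) *: p k) => C convC; split => Cp.
  apply: convex_comb => // [k I1k|]; first by rewrite divr_ge0 ?ltW.
  by rewrite -mulr_suml divff ?gt_eqF.
rewrite -combN; apply: convex_comb => // [k nI1k|].
  by rewrite divr_ge0 ?oppr_ge0 ?(ltW T_gt0) // leNgt.
by rewrite -mulr_suml sumN divff ?gt_eqF.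
Qed.

Definition common_point {R : realFieldType} {n : nat} {I : finType}
    (K : set 'cV[R]_n) (C : I -> set 'cV[R]_n) (S : {set I}) :=
  exists2 x, K x & forall i, i \in S -> C i x.

(* Induction on the size of S; for #|S| > n+1, pick for each
   k in S a common point of S \ {k} and take the Radon point of these. *)
Lemma helly (R : realFieldType) n (I : finType) (K : set 'cV[R]_n)
    (C : I -> set 'cV[R]_n) :
  convex_set K -> (forall i, convex_set (C i)) ->
  (forall S : {set I}, (#|S| <= n.+1)%N -> common_point K C S) ->
  forall S, common_point K C S.
Proof.
move=> convK convC small S; have [N] := ubnP #|S|; elim: N S => // N IH S.
rewrite ltnS => S_le; have [|S_big] := leqP #|S| n.+1; first exact: small.
have /choice[q Hq] : forall c : 'I_#|S|,
    exists x, K x /\ forall i, i \in S :\ enum_val c -> C i x.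
  move=> c; have [|x Kx Cx] := IH (S :\ enum_val c); last by exists x.
  by rewrite (cardsD1 (enum_val c)) enum_valP add1n in S_le.
have [I1 [z radon_z]] := radon q S_big.
exists z.
  by have [Kz _] := radon_z K convK; apply: Kz => c _; case: (Hq c).
move=> i iS; pose ci := enum_rank_in iS i.
have q_Ci c : c != ci -> C i (q c).
  move=> c_ci; apply: (Hq c).2; rewrite !inE iS andbT.
  apply: contra c_ci; rewrite -{1}(enum_rankK_in iS iS) -/ci.
  by move=> /eqP/enum_val_inj ->.
have [Cz1 Cz2] := radon_z (C i) (convC i).
have [I1ci|nI1ci] := boolP (I1 ci).
  by apply: Cz2 => c nI1c; apply: q_Ci; apply: contraNneq nI1c => ->.
by apply: Cz1 => c I1c; apply: q_Ci; apply: contraTneq I1c => ->.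
Qed.

Definition row_halfspace {R : realFieldType} {m n : nat} (A : 'M[R]_(m, n))
    (c : 'cV[R]_m) (i : 'I_m) : set 'cV[R]_n :=
  [set x | (A *m x) i ord0 <= c i ord0].

Lemma convex_row_halfspace (R : realFieldType) m n (A : 'M[R]_(m, n))
    (c : 'cV[R]_m) (i : 'I_m) : convex_set (row_halfspace A c i).
Proof.
move=> x y t; rewrite !inE /row_halfspace /= => Ax Ay.
have -> : conv t x y = t%:num *: x + (1 - t%:num) *: y by [].
move: Ax Ay; rewrite mulmxDr -!scalemxAr !mxE.
have [t0 t1] : 0 <= t%:num /\ t%:num <= 1 by split; [exact: ge0 | exact: le1].
nra.
Qed.

(* An infeasible system has an infeasible subsystem of at most n+1
   inequalities: the contrapositive of Helly's theorem for the halfspaces. *)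
Lemma infeasible_core {R : realType} {m n : nat} {K : set 'cV[R]_n}
    {A : 'M[R]_(m, n)} {b : 'cV[R]_m} :
  convex_set K -> K `&` polyhedron A b = set0 ->
  exists2 S : {set 'I_m}, (#|S| <= n.+1)%N &
    ~ common_point K (row_halfspace A b) S.
Proof.
move=> convK KP; apply: contrapT => no_core.
have [x Kx Px] : common_point K (row_halfspace A b) [set: 'I_m].
  apply: helly => // [i|S S_le]; first exact: convex_row_halfspace.
  by apply: contrapT => nS; apply: no_core; exists S.
have : (K `&` polyhedron A b) x by split=> // i; apply: Px; rewrite inE.
by rewrite KP.
Qed.

(* With Sp the rows of S where
   eps_j > 0, the point (1 - #|Sp|/(n+1)) x0 + sum_(j in Sp) p j / (n+1)
   lies in K and satisfies the rows of S of the original system: on row i,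
   the relaxation eps_i is cancelled by the tightening in p i when i is in
   Sp, and is nonpositive otherwise. *)
Lemma averaged_common_point {R : realType} {m n : nat} {K : set 'cV[R]_n}
    {A : 'M[R]_(m, n)} {b eps : 'cV[R]_m} {S : {set 'I_m}} {x0 : 'cV[R]_n}
    {p : 'I_m -> 'cV[R]_n} :
  convex_set K -> (#|S| <= n.+1)%N ->
  K x0 -> polyhedron A (b + eps) x0 ->
  (forall j, 0 < eps j ord0 -> K (p j) /\
    polyhedron A (b + (eps - (n.+1%:R * eps j ord0) *: @std_basis R m j)) (p j)) ->
  common_point K (row_halfspace A b) S.
Proof.
move=> convK S_le Kx0 Px0 Hp.
pose Sp := [set j in S | 0 < eps j ord0].
pose w : R := n.+1%:R^-1; pose W := \sum_(j in Sp) w.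
have w_gt0 : 0 < w by rewrite invr_gt0 ltr0Sn.
have wn : w * n.+1%:R = 1 by rewrite mulVf ?pnatr_eq0.
have W_le1 : W <= 1.
  rewrite /W sumr_const -mulr_natl ler_pdivrMr ?ltr0Sn // mul1r ler_nat.
  apply: leq_trans S_le; apply/subset_leq_card/fintype.subsetP => j.
  by rewrite inE => /andP[].
have p_row j : j \in Sp -> K (p j) /\ forall i,
    (A *m p j) i ord0 <=
      b i ord0 + eps i ord0 - (j == i)%:R * (n.+1%:R * eps j ord0).
  rewrite inE => /andP[_ /Hp[Kp Pp]]; split=> // i.
  by have := Pp i; rewrite !mxE eqxx andbT eq_sym; lra.
exists ((1 - W) *: x0 + \sum_(j in Sp) w *: p j).
  by apply: convex_comb_base => // [j _|j /p_row[]]; first exact: ltW.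
move=> i iS; rewrite /row_halfspace /=.
rewrite mulmxDr -scalemxAr mulmx_sumr mxE summxE [X in X + _ <= _]mxE.
under eq_bigr do rewrite -scalemxAr mxE.
have x0_row : (A *m x0) i ord0 <= b i ord0 + eps i ord0.
  by have := Px0 i; rewrite [X in _ <= X]mxE.
have p_row_i j : j \in Sp ->
    w * (A *m p j) i ord0 <=
      w * (b i ord0 + eps i ord0) - (j == i)%:R * eps j ord0.
  move=> /p_row[_ /(_ i) pj_row].
  have := ler_wpM2l (ltW w_gt0) pj_row.
  rewrite [in X in _ <= X -> _]mulrBr [w * (_ * _)]mulrCA.
  by rewrite [w * (_ * _)]mulrA wn mul1r.
(* Only the point p i tightens row i, by exactly (n+1) eps_i. *)
have tightening :
    \sum_(j in Sp) (j == i)%:R * eps j ord0 = (i \in Sp)%:R * eps i ord0.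
  have [iSp|iSp] := boolP (i \in Sp).
    rewrite (bigD1 i) //= eqxx big1 ?addr0 // => j /andP[_ /negbTE ->].
    exact: mul0r.
  rewrite big1 ?mul0r // => j jSp; suff /negbTE -> : j != i by rewrite mul0r.
  by apply: contraNneq iSp => <-.
have sum_row := ler_sum (index_enum _) p_row_i.
rewrite sumrB -mulr_suml tightening -/W in sum_row.
have x0_row_W :
    (1 - W) * (A *m x0) i ord0 <= (1 - W) * (b i ord0 + eps i ord0).
  by rewrite ler_wpM2l // subr_ge0.
have relaxation_spent : eps i ord0 - (i \in Sp)%:R * eps i ord0 <= 0.
  rewrite inE iS /=; case: ltP => [_|eps_le0]; first by rewrite mul1r subrr.
  by rewrite mul0r subr0.
lra.
Qed.

Theorem lemma2p3 (R : realType) (m n : nat) (K : set 'cV[R]_n)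
    (A : 'M[R]_(m, n)) (b : 'cV[R]_m) :
  compact K -> convex_set K ->
  K `&` polyhedron A b = set0 ->
  forall eps : 'cV[R]_m,
    K `&` polyhedron A (b + eps) = set0 \/
    exists j : 'I_m, 0 < eps j ord0 /\
      K `&` polyhedron A (b + (eps - (n.+1%:R * eps j ord0) *: @std_basis R m j)) = set0.
Proof.
move=> _ convK KP eps; have [S S_le noS] := infeasible_core convK KP.
have [|P_eps_nonempty] := pselect (K `&` polyhedron A (b + eps) = set0).
  by left.
right; apply: contrapT => no_j.
have /set0P[x0 [Kx0 Px0]] : K `&` polyhedron A (b + eps) != set0.
  exact/eqP.
have /choice[p Hp] : forall j, exists x, 0 < eps j ord0 -> K x /\
    polyhedron A (b + (eps - (n.+1%:R * eps j ord0) *: @std_basis R m j)) x.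
  move=> j; have [eps_j|eps_j] := boolP (0 < eps j ord0); last first.
    by exists 0.
  have /set0P[x [Kx Px]] :
      K `&` polyhedron A (b + (eps - (n.+1%:R * eps j ord0) *: @std_basis R m j)) != set0.
    by apply/eqP => P0; apply: no_j; exists j.
  by exists x.
exact: noS (averaged_common_point convK S_le Kx0 Px0 Hp).
Qed.
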